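(* Let $G\in\mathbb{F}_q^{m\times n}$ have rank $m\le n$, and let $\mathcal{X}$ be a $k$-dimensional affine source over $\mathbb{F}_q^n$, i.e. uniform on $a+V$ for a $k$-dimensional subspace $V\subseteq\mathbb{F}_q^n$ and $a\in\mathbb{F}_q^n$, such that for $X\sim\mathcal{X}$ the distribution of $G\cdot X^\top$ has entropy at least $k'\log q$ (i.e., the linear map defined by $G$ is a $(k\log q)\to_0(k'\log q)$ condenser for $\mathcal{X}$). Let $H\in\mathbb{F}_q^{(n-m)\times n}$ have rank $n-m$ and satisfy $GH^\top=0$, and let $\mathcal{Y}$ be the $(n-k)$-dimensional affine source uniform on $b+V^\perp$ for some $b\in\mathbb{F}_q^n$, where $V^\perp=\{y\in\mathbb{F}_q^n: y\cdot v^\top=0\ \forall v\in V\}$. Then for $Y\sim\mathcal{Y}$, the distribution of $H\cdot Y^\top$ has entropy at least $(n-k+k'-m)\log q$.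
   Context: Logarithms are base 2. The image of an affine source under a linear map is uniform on an affine subspace, so its (Shannon and min-) entropy equals $\log_2$ of the size of that affine subspace. *)

From HB Require Import structures.
From mathcomp Require Import all_boot all_order all_algebra.
From mathcomp Require Import reals exp.
Set Implicit Arguments. Unset Strict Implicit. Unset Printing Implicit Defensive.
Import Order.TTheory GRing.Theory Num.Theory.
Local Open Scope ring_scope.

Definition log2 {R : realType} (x : R) : R := ln x / ln 2.

(* Shannon entropy (base 2) of the distribution of [f X] when [X] is
   uniform on the nonempty finite set [S]; convention 0 log 0 = 0. *)
Definition pushforward_prob {R : realType} {T U : finType}
  (S : {set T}) (f : T -> U) (y : U) : R :=
  #|[set x in S | f x == y]|%:R / #|S|%:R.

Definition entropy_uniform_image {R : realType} {T U : finType}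
  (S : {set T}) (f : T -> U) : R :=
  - \sum_(y : U | pushforward_prob (R:=R) S f y != 0)
      pushforward_prob (R:=R) S f y * log2 (pushforward_prob (R:=R) S f y).

(* Vectors of F_q^n are row vectors 'rV[F]_n; a subspace V is the row space
   of a square matrix V : 'M[F]_n, membership (v <= V)%MS, dimension \rank V. *)
Definition subspace_set {F : finFieldType} {n : nat} (V : 'M[F]_n)
  : {set 'rV[F]_n} := [set v : 'rV[F]_n | (v <= V)%MS].

Definition affine_set {F : finFieldType} {n : nat} (a : 'rV[F]_n) (V : 'M[F]_n)
  : {set 'rV[F]_n} := [set a + v | v in subspace_set V].

Definition perp_set {F : finFieldType} {n : nat} (V : 'M[F]_n)
  : {set 'rV[F]_n} :=
  [set y : 'rV[F]_n | [forall v : 'rV[F]_n, (v <= V)%MS ==> (y *m v^T == 0)]].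

From HB Require Import structures.
From mathcomp Require Import all_boot all_order all_algebra.
From mathcomp Require Import reals exp.
From mathcomp Require Import ring lra.
Import Order.TTheory GRing.Theory Num.Theory.
Local Open Scope ring_scope.

(* The map x |-> M x^T sends an affine source a + U onto an affine space, every
   nonempty fibre being a translate of U :&: ker M^T; so the image is uniform
   with entropy rank (U M^T) log q.  With K := ker V^T = V^perp the hypothesis
   reads rank (V G^T) >= k' and the claim rank (K H^T) >= n - k + k' - m.
   Since G H^T = 0 and rank G + rank H = n, the row space of G is ker H^T, so
   K :&: ker H^T = K :&: G; computing the rank of this intersection once from
   the side of H and once from the side of G gives
   rank (K H^T) + m = (n - k) + rank (V G^T). *)

Lemma card_fibers {T U : finType} (S : {set T}) (f : T -> U) :
  #|S| = (\sum_y #|[set x in S | f x == y]|)%N.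
Proof.
rewrite -sum1_card (partition_big f predT) //=.
by apply: eq_bigr => y _; rewrite sum1_card; apply: eq_card => x; rewrite inE.
Qed.

Lemma entropy_uniform_image_const_fibers (R : realType) {T U : finType}
    (S : {set T}) (f : T -> U) (c : nat) :
  (forall y, #|[set x in S | f x == y]| = 0%N \/
             #|[set x in S | f x == y]| = c) ->
  (0 < #|S|)%N ->
  entropy_uniform_image (R:=R) S f = log2 (#|S|%:R / c%:R).
Proof.
set fib := fun y => [set x in S | f x == y] => fibE S_gt0.
set Y := #|[pred y | #|fib y| != 0%N]|.
have SE : #|S| = (c * Y)%N.
  rewrite (card_fibers S f) (bigID (fun y => #|fib y| != 0%N)) /=.
  rewrite [X in (_ + X)%N]big1 => [|y /negbNE/eqP //].
  rewrite addn0 mulnC -sum_nat_const; apply: eq_bigr => y.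
  by have [->|] := fibE y.
have c_gt0 : (0 < c)%N by move: S_gt0; rewrite SE muln_gt0 => /andP[].
have Y_gt0 : (0 < Y)%N by move: S_gt0; rewrite SE muln_gt0 => /andP[].
have probE y : #|fib y| != 0%N ->
    pushforward_prob (R:=R) S f y = c%:R / #|S|%:R.
  by rewrite /pushforward_prob -/(fib y); have [->|->] := fibE y.
have prob_neq0 y :
    (pushforward_prob (R:=R) S f y != 0) = (#|fib y| != 0%N).
  rewrite /pushforward_prob mulf_eq0 invr_eq0 !pnatr_eq0.
  by rewrite -[#|S| == 0%N]negbK -lt0n S_gt0 orbF.
rewrite /entropy_uniform_image (eq_bigl _ _ prob_neq0).
rewrite (eq_bigr (fun=> c%:R / #|S|%:R * log2 (c%:R / #|S|%:R))); last first.
  by move=> y /probE ->.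
have S_pos : (0 : R) < #|S|%:R / c%:R by rewrite divr_gt0 ?ltr0n.
rewrite sumr_const -invf_div /log2 lnV ?posrE // -/Y SE natrM.
by field; rewrite gt_eqF ?ln_gt0 ?ltr1n // !pnatr_eq0 -!lt0n c_gt0 Y_gt0.
Qed.

Lemma card_subspace_set (F : finFieldType) n (U : 'M[F]_n) :
  #|subspace_set U| = (#|F| ^ \rank U)%N.
Proof.
have -> : subspace_set U =
    [set w *m row_base U | w in [set: 'rV[F]_(\rank U)]].
  apply/setP => v; rewrite inE -(eq_row_base U); apply/idP/imsetP.
    by move=> /submxP[w ->]; exists w; rewrite ?inE.
  by move=> [w _ ->]; rewrite submxMl.
rewrite card_imset ?cardsT ?card_mx ?mul1n //.
exact/row_free_inj/row_base_free.
Qed.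

Lemma perp_setE (F : finFieldType) n (V : 'M[F]_n) :
  perp_set V = subspace_set (kermx V^T).
Proof.
apply/setP => y; rewrite !inE sub_kermx; apply/forallP/idP => [yV | /eqP yV v].
  apply/eqP/rowP => i; have /implyP := yV (row i V).
  rewrite row_sub => /(_ isT) /eqP /matrixP /(_ ord0 ord0).
  rewrite !mxE => yVi; rewrite -[RHS]yVi; apply: eq_bigr => j _.
  by rewrite !mxE; congr (y _ j * _).
by apply/implyP => /submxP[w ->]; rewrite trmx_mul mulmxA yV mul0mx.
Qed.

Section AffineImage.
Variables (F : finFieldType) (p n : nat).
Variables (M : 'M[F]_(p, n)) (U : 'M[F]_n) (a : 'rV[F]_n).

Let A := [set a + v | v in subspace_set U].

Lemma affine_fiberE x0 : x0 \in A ->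
  [set x in A | M *m x^T == M *m x0^T] =
  [set x0 + w | w in subspace_set (U :&: kermx M^T)%MS].
Proof.
case/imsetP=> u0; rewrite inE => u0U ->.
have MxE (x : 'rV_n) : M *m x^T = (x *m M^T)^T by rewrite trmx_mul trmxK.
apply/setP => x; rewrite !inE; apply/andP/imsetP => [[/imsetP[u uU ->]]|].
  rewrite !MxE => /eqP/trmx_inj; rewrite !mulmxDl => /addrI Mu.
  exists (u - u0); last by rewrite [u - u0]addrC addrA addrK.
  rewrite inE in uU; rewrite inE sub_capmx sub_kermx addmx_sub ?eqmx_opp //.
  by rewrite mulmxBl Mu subrr eqxx.
move=> [w]; rewrite inE sub_capmx sub_kermx => /andP[wU /eqP Mw] ->; split.
  by apply/imsetP; exists (u0 + w); rewrite ?inE ?addmx_sub ?addrA.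
by rewrite !MxE mulmxDl Mw addr0.
Qed.

Lemma card_affine_fiber y :
  #|[set x in A | M *m x^T == y]| = 0%N \/
  #|[set x in A | M *m x^T == y]| = (#|F| ^ \rank (U :&: kermx M^T))%N.
Proof.
have [->|[x0]] := set_0Vmem [set x in A | M *m x^T == y].
  by left; rewrite cards0.
rewrite inE => /andP[x0A /eqP <-]; right.
by rewrite affine_fiberE // card_imset ?card_subspace_set //; apply: addrI.
Qed.

Lemma entropy_affine_image (R : realType) :
  entropy_uniform_image (R:=R) A (fun x => M *m x^T) =
  (\rank (U *m M^T))%:R * log2 (#|F|%:R : R).
Proof.
have q_gt0 : (0 < #|F|)%N by apply/card_gt0P; exists 0.
have cardA : #|A| = (#|F| ^ \rank U)%N.
  by rewrite card_imset ?card_subspace_set //; apply: addrI.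
rewrite (entropy_uniform_image_const_fibers R A _ _ card_affine_fiber);
  last by rewrite cardA expn_gt0 q_gt0.
rewrite cardA -(mxrank_mul_ker U M^T) expnD natrM mulfK; last first.
  by rewrite pnatr_eq0 -lt0n expn_gt0 q_gt0.
by rewrite natrX /log2 lnXn ?ltr0n // mulr_natl mulrnAl.
Qed.

End AffineImage.

Lemma kermx_tr_eqmx {F : fieldType} {p r n : nat}
    (G : 'M[F]_(p, n)) (H : 'M[F]_(r, n)) :
  G *m H^T = 0 -> (\rank G + \rank H)%N = n -> (kermx H^T :=: G)%MS.
Proof.
move=> GH0 rankGH; apply: eqmx_sym; apply/eqmxP.
rewrite -(mxrank_leqif_eq _).2; last by rewrite sub_kermx GH0.
by rewrite mxrank_ker mxrank_tr (canRL (addnK _) rankGH).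
Qed.

Lemma mxrank_perp_mul {F : fieldType} {p r n : nat}
    (G : 'M[F]_(p, n)) (H : 'M[F]_(r, n)) (V : 'M[F]_n) :
  (kermx H^T :=: G)%MS ->
  (\rank (kermx V^T *m H^T) + \rank G =
   \rank (kermx V^T) + \rank (V *m G^T))%N.
Proof.
move=> kerHG.
rewrite -(mxrank_mul_ker (kermx V^T) H^T) (cap_eqmx (eqmx_refl _) kerHG).
rewrite -(mxrank_mul_ker G V^T) capmxC.
have -> : \rank (G *m V^T) = \rank (V *m G^T).
  by rewrite -mxrank_tr trmx_mul trmxK.
by rewrite (addnC (\rank (V *m G^T))) addnA.
Qed.

Theorem mainTheorem19 (R : realType) (F : finFieldType) (m n k k' : nat)
  (G : 'M[F]_(m, n)) (H : 'M[F]_(n - m, n)) (V : 'M[F]_n) (a b : 'rV[F]_n) :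
  (m <= n)%N ->
  \rank G = m ->
  \rank V = k ->
  k'%:R * log2 (#|F|%:R : R) <=
    entropy_uniform_image (R:=R) (affine_set a V) (fun x => G *m x^T) ->
  \rank H = (n - m)%N ->
  G *m H^T = 0 ->
  (n%:R - k%:R + k'%:R - m%:R) * log2 (#|F|%:R : R) <=
    entropy_uniform_image (R:=R) [set b + y | y in perp_set V]
      (fun y => H *m y^T).
Proof.
move=> le_mn rankG rankV condG rankH GH0.
have log_q_gt0 : 0 < log2 (#|F|%:R : R).
  have q_gt1 : (1 < #|F|)%N.
    by apply/card_gt1P; exists 0, 1; rewrite eq_sym oner_eq0.
  by rewrite /log2 divr_gt0 ?ln_gt0 ?ltr1n.
rewrite /affine_set entropy_affine_image ler_pM2r // ler_nat in condG.
rewrite perp_setE entropy_affine_image ler_pM2r //.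
have kerHG : (kermx H^T :=: G)%MS.
  by apply: kermx_tr_eqmx; rewrite // rankG rankH subnKC.
have := mxrank_perp_mul G H V kerHG.
rewrite mxrank_ker mxrank_tr rankV rankG.
move=> /(congr1 (fun i : nat => i%:R : R)).
have le_kn : (k <= n)%N by rewrite -rankV rank_leq_col.
rewrite !natrD natrB //; move: condG; rewrite -(ler_nat R); lra.
Qed.
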